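(* Consider the latent class MNL pricing model of the context. Then: (i) $\bar{\mathcal{R}}\le\beta_e\,\mathcal{R}^e\le\beta_e\,\mathcal{R}^*$, with no further conditions, where $\beta_e$ is $\beta_f$ for $f=e=(1,\dots,1)$. (ii) If for each $j\in M$ the price sensitivities $b_{kj}=b_j$ do not depend on $k\in N$, then the economic factor and the robust factor are both proportional to $e$ (so pricing along either is equivalent to uniform pricing). (iii) For every vector $f$ with positive components such that $d^j(\bar p^j)'f\le\min_{i\in N}f_i$ for all $j\in M$, we have $\bar{\mathcal{R}}\le\beta_f\,\mathcal{R}^f\le\beta_f\,\mathcal{R}^*$.
   Context: Products $N=\{1,\dots,n\}$, customer types $M=\{1,\dots,m\}$ with weights $\theta_j>0$, $\sum_j\theta_j=1$. For type $j$, with parameters $a_{ij}\in\mathbb{R}$ and $b_{ij}>0$, the demand for product $i$ at price vector $p$ is $$d_{ij}(p)=\frac{\exp(a_{ij}-b_{ij}p_i)}{1+\sum_{k\in N}\exp(a_{kj}-b_{kj}p_k)},$$ $d^j(p)$ is the vector $(d_{ij}(p))_{i\in N}$, and $R_j(p)=\sum_ip_id_{ij}(p)$. Standing assumption (A0): each $R_j$ attains its maximum $\mathcal{R}^*_j$ over $p\ge 0$ at a price vector $\bar p^j=(\bar p_{ij})_i$ with positive finite components. $\bar{\mathcal{R}}:=\sum_j\theta_j\mathcal{R}^*_j$; $R(p):=\sum_j\theta_jR_j(p)$; $\mathcal{R}^*:=\max_{p\ge0}R(p)$; for positive $f$, $\mathcal{R}^f:=\max_{q>0}R(qf)$ and $\beta_f:=1+\ln(q_{\max}/q_{\min})$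 with $q_{\min}=\min_{i,j}\bar p_{ij}/f_i$, $q_{\max}=\max_{i,j}\bar p_{ij}/f_i$. The economic factor is $f=\sum_j\alpha_j\bar p^j$ with $\alpha_j=\theta_j\mathcal{R}^*_j/\bar{\mathcal{R}}$; the robust factor is $f^*_i=\sqrt{p^L_ip^H_i}$ where $p^H_i=\max_j\bar p_{ij}$, $p^L_i=\min_j\bar p_{ij}$. *)

From HB Require Import structures.
From mathcomp Require Import all_boot all_order all_algebra.
From mathcomp Require Import all_classical all_reals all_analysis.
Set Implicit Arguments. Unset Strict Implicit. Unset Printing Implicit Defensive.
Import Order.TTheory GRing.Theory Num.Theory.
Local Open Scope classical_set_scope.
Local Open Scope ring_scope.

Section LatentMNL.
Variables (R : realType) (n m : nat).
(* weights theta_j, parameters a_ij, b_ij (indexed a i j), optimal prices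
   pbar j i = \bar p_{ij} *)
Variables (theta : 'I_m -> R) (a b : 'I_n -> 'I_m -> R) (pbar : 'I_m -> 'I_n -> R).

Definition demand (j : 'I_m) (p : 'I_n -> R) (i : 'I_n) : R :=
  expR (a i j - b i j * p i) /
    (1 + \sum_(k < n) expR (a k j - b k j * p k)).

Definition revj (j : 'I_m) (p : 'I_n -> R) : R := \sum_(i < n) p i * demand j p i.

Definition totrev (p : 'I_n -> R) : R := \sum_(j < m) theta j * revj j p.

(* R^*_j (maximum of R_j attained at pbar j under (A0)) *)
Definition Rstarj (j : 'I_m) : R := revj j (pbar j).

Definition Rbar : R := \sum_(j < m) theta j * Rstarj j.

Definition Rstar : R := sup [set totrev p | p in [set p | forall i, 0 <= p i]].

Definition Rf (f : 'I_n -> R) : R :=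
  sup [set totrev (fun i => q * f i) | q in [set q : R | 0 < q]].

Definition qmin (f : 'I_n -> R) : R :=
  inf [set x | exists (i : 'I_n) (j : 'I_m), x = pbar j i / f i].
Definition qmax (f : 'I_n -> R) : R :=
  sup [set x | exists (i : 'I_n) (j : 'I_m), x = pbar j i / f i].

Definition beta (f : 'I_n -> R) : R := 1 + ln (qmax f / qmin f).

Definition evec : 'I_n -> R := fun _ => 1.

Definition alpha (j : 'I_m) : R := theta j * Rstarj j / Rbar.
Definition econ_factor : 'I_n -> R := fun i => \sum_(j < m) alpha j * pbar j i.

Definition pH (i : 'I_n) : R := sup [set x | exists j : 'I_m, x = pbar j i].
Definition pL (i : 'I_n) : R := inf [set x | exists j : 'I_m, x = pbar j i].
Definition robust_factor : 'I_n -> R := fun i => Num.sqrt (pL i * pH i).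

End LatentMNL.

(** For (iii), write [Rbar = \sum_(j,i) theta_j d_ij(pbar^j) f_i * (pbar_ij / f_i)]:
    masses [theta_j d_ij(pbar^j) f_i] placed at heights [pbar_ij / f_i] in [[qmin, qmax]].
    The hypothesis [d^j(pbar^j)' f <= min f] makes the mass lying at height at least [q]
    smaller than [\sum_j theta_j d^j(q f)' f], so [q] times that mass is at most
    [R(q f) <= R^f]. A layer-cake argument then bounds the total by [R^f (1 + ln (qmax/qmin))].
    Part (i) is (iii) for [f = e], since total demand is at most 1. For (ii), the first-order
    condition at the optimum reads [pbar_ij = R*_j + 1/b_ij], which does not depend on [i]
    when [b_ij] does not. *)

From HB Require Import structures.
From mathcomp Require Import all_boot all_order all_algebra.
From mathcomp Require Import all_classical all_reals all_analysis.
From mathcomp Require Import ring lra.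
Import Order.TTheory GRing.Theory Num.Theory.
Set Implicit Arguments. Unset Strict Implicit.
Local Open Scope ring_scope.

Section RealFacts.
Variable R : realType.

Lemma subr_le_mul_ln (x y : R) : 0 < x -> 0 < y -> x - y <= x * ln (x / y).
Proof.
move=> x_gt0 y_gt0.
have yx_gt0 : 0 < y / x by rewrite divr_gt0.
have : ln (y / x) <= y / x - 1.
  have := @le_ln1Dx R (y / x - 1); rewrite addrCA subrr addr0.
  by apply; rewrite ltrBrDl subrr.
rewrite -invf_div lnV ?posrE ?divr_gt0 // => le_ln.
rewrite -ler_pdivrMl // mulrBr mulVf ?lt0r_neq0 // mulrC.
lra.
Qed.

Lemma mulr_expR1B_lt1 (z : R) : z != 1 -> z * expR (1 - z) < 1.
Proof.
move=> z_neq1; have : 1 + (z - 1) < expR (z - 1) by apply: expR_gt1Dx; rewrite subr_eq0.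
rewrite addrCA subrr addr0 -(ltr_pM2r (expR_gt0 (1 - z))) -expRD.
by rewrite (_ : z - 1 + (1 - z) = 0) ?expR0 //; ring.
Qed.

Lemma sumr_gt0 (I : finType) (F : I -> R) (i0 : I) :
  (forall i, 0 < F i) -> 0 < \sum_i F i.
Proof.
move=> F_gt0; rewrite (bigD1 i0) //= ltr_wpDr ?F_gt0 //.
by apply: sumr_ge0 => i _; exact: ltW.
Qed.

Local Open Scope classical_set_scope.

Lemma sup_max (E : set R) x : E x -> ubound E x -> sup E = x.
Proof.
move=> Ex ubx; apply/le_anti/andP; split; first by apply: ge_sup => //; exists x.
by apply: ub_le_sup => //; exists x.
Qed.

Lemma inf_min (E : set R) x : E x -> lbound E x -> inf E = x.
Proof.
move=> Ex lbx; apply/le_anti/andP; split; first by apply: ge_inf => //; exists x.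
by apply: lb_le_inf => //; exists x.
Qed.

End RealFacts.

Section FiniteExtrema.
Variables (R : realType) (T : finType) (E : set R) (g : T -> R).
Hypothesis E_image : forall x, E x <-> exists t, x = g t.
Local Open Scope classical_set_scope.

Lemma inf_finite_image (t0 : T) :
  exists t, inf E = g t /\ forall t', g t <= g t'.
Proof.
have [t _ t_min] := @arg_minP _ _ T t0 predT g isT.
exists t; split=> [|t']; last exact: t_min.
apply: inf_min; first by apply/E_image; exists t.
by move=> x /E_image [t' ->]; apply: t_min.
Qed.

Lemma sup_finite_image (t0 : T) :
  exists t, sup E = g t /\ forall t', g t' <= g t.
Proof.
have [t _ t_max] := @arg_maxP _ _ T t0 predT g isT.
exists t; split=> [|t']; last exact: t_max.
apply: sup_max; first by apply/E_image; exists t.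
by move=> x /E_image [t' ->]; apply: t_max.
Qed.
End FiniteExtrema.

Section LayerCake.
Variables (R : realType) (T : finType) (c r : T -> R) (L S : R).
Hypotheses (L_gt0 : 0 < L) (c_ge0 : forall t, 0 <= c t) (r_geL : forall t, L <= r t).

(* [C] is mass already stacked at the top level [M]. Removing a point of maximal height [M1]
   from [A] moves its mass into [C] at level [M1]; the band between [M1] and [M] costs at most
   [C * (M - M1) <= S * ln (M / M1)]. *)
Lemma layer_cake_ln_set (A : {set T}) (C M : R) : 0 <= C -> L <= M ->
  (forall t, t \in A -> r t <= M) ->
  (forall q, 0 < q -> q <= M -> q * (C + \sum_(t in A | q <= r t) c t) <= S) ->
  C * M + \sum_(t in A) c t * r t <= S * (1 + ln (M / L)).
Proof.
elim: {A}_.+1 {-2}A (ltnSn #|A|) C M => // k IH A cardA C M C_ge0 LM rA_leM layer.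
have M_gt0 : 0 < M := lt_le_trans L_gt0 LM.
have CM_leS : C * M <= S.
  apply: le_trans (layer M M_gt0 (lexx M)).
  by rewrite mulrC ler_wpM2l ?(ltW M_gt0) // lerDl sumr_ge0.
have S_ge0 : 0 <= S by apply: le_trans CM_leS; rewrite mulr_ge0 ?(ltW M_gt0).
have [-> | [t1 At1]] := set_0Vmem A.
  rewrite big_set0 addr0; apply: le_trans CM_leS _.
  by rewrite ler_peMr // lerDl ln_ge0 // ler_pdivlMr // mul1r.
have [t0 At0 t0_max] : exists2 t0, t0 \in A & forall t, t \in A -> r t <= r t0.
  by case: (arg_maxP r At1) => t0; exists t0.
set M1 := r t0 in t0_max *.
have M1_gt0 : 0 < M1 := lt_le_trans L_gt0 (r_geL t0).
have M1_leM : M1 <= M := rA_leM t0 At0.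
have IH1 : (C + c t0) * M1 + \sum_(t in A :\ t0) c t * r t <= S * (1 + ln (M1 / L)).
  apply: IH; rewrite ?addr_ge0 //.
  - by move: cardA; rewrite (cardsD1 t0) At0.
  - exact: r_geL.
  - by move=> t; rewrite in_setD1 => /andP[_ /t0_max].
  move=> q q_gt0 q_leM1.
  have -> : C + c t0 + \sum_(t in A :\ t0 | q <= r t) c t
            = C + \sum_(t in A | q <= r t) c t.
    by rewrite -addrA big_mkcondr [in RHS]big_mkcondr (big_setD1 t0 At0) /= q_leM1.
  exact: layer q q_gt0 (le_trans q_leM1 M1_leM).
have top_layer : C * (M - M1) <= S * ln (M / M1).
  have ln_ratio_ge0 : 0 <= ln (M / M1) by rewrite ln_ge0 // ler_pdivlMr // mul1r.
  apply: le_trans (ler_wpM2r ln_ratio_ge0 CM_leS).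
  by rewrite -mulrA ler_wpM2l // subr_le_mul_ln.
have lnE : ln (M / L) = ln (M / M1) + ln (M1 / L).
  rewrite -lnM ?posrE ?divr_gt0 // mulrA divfK //; exact: lt0r_neq0.
rewrite (big_setD1 t0 At0) lnE /=.
move: IH1 top_layer; rewrite -/M1 !mulrDr !mulrDl mulrN; lra.
Qed.

Lemma layer_cake_ln (M : R) : L <= M -> (forall t, r t <= M) ->
  (forall q, 0 < q -> q <= M -> q * \sum_(t | q <= r t) c t <= S) ->
  \sum_t c t * r t <= S * (1 + ln (M / L)).
Proof.
move=> LM r_leM layer.
have := @layer_cake_ln_set [set: T] 0 M (lexx 0) LM (fun t _ => r_leM t).
rewrite mul0r add0r (eq_bigl predT) => [|t]; last by rewrite inE.
apply=> q q_gt0 q_leM; rewrite add0r (eq_bigl (fun t => q <= r t)) => [|t].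
  exact: layer.
by rewrite inE.
Qed.
End LayerCake.

Section LogitShares.
Variables (R : realType) (n : nat).
Implicit Types (w p f g : 'I_n -> R) (r : R).

Definition share w i := w i / (1 + \sum_k w k).

Section NonnegWeights.
Variable w : 'I_n -> R.
Hypothesis w_ge0 : forall i, 0 <= w i.

Lemma share_denom_gt0 : 0 < 1 + \sum_k w k.
Proof. by rewrite ltr_wpDr // sumr_ge0. Qed.

Lemma sum_share_le1 : \sum_i share w i <= 1.
Proof.
by rewrite -mulr_suml ler_pdivrMr ?share_denom_gt0 // mul1r lerDr.
Qed.

Lemma share_rev_subE p r :
  (\sum_i p i * share w i - r) * (1 + \sum_k w k) = \sum_i (p i - r) * w i - r.
Proof.
have D_neq0 : 1 + \sum_k w k != 0 by rewrite lt0r_neq0 // share_denom_gt0.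
have revE : (\sum_i p i * share w i) * (1 + \sum_k w k) = \sum_i p i * w i.
  by rewrite mulr_suml; apply: eq_bigr => i _; rewrite /share mulrA divfK.
have markupE : \sum_i (p i - r) * w i = \sum_i p i * w i - r * \sum_i w i.
  by rewrite mulr_sumr -sumrB; apply: eq_bigr => i _; rewrite mulrBl.
rewrite mulrBl revE markupE; ring.
Qed.

Lemma share_rev_fixpoint p :
  \sum_i (p i - \sum_k p k * share w k) * w i = \sum_k p k * share w k.
Proof.
by apply/eqP; rewrite -subr_eq0 -share_rev_subE subrr mul0r.
Qed.

Lemma share_rev_le_iff p r :
  (\sum_i p i * share w i <= r) = (\sum_i (p i - r) * w i <= r).
Proof.
by rewrite -subr_le0 -(pmulr_lle0 _ share_denom_gt0) share_rev_subE subr_le0.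
Qed.

End NonnegWeights.

(* By [share_rev_subE] with [r] the left-hand revenue, both sides reduce to sums of
   markups over [r] weighted by [w] and [w'], which are compared term by term. *)
Lemma share_rev_le w w' g f :
  (forall i, 0 <= w i) -> (forall i, 0 <= w' i) ->
  (forall i, (g i - \sum_k g k * share w k) * w i
             <= (f i - \sum_k g k * share w k) * w' i) ->
  \sum_i g i * share w i <= \sum_i f i * share w' i.
Proof.
move=> w_ge0 w'_ge0 pointwise.
rewrite -subr_ge0 -(pmulr_lge0 _ (share_denom_gt0 w'_ge0)) share_rev_subE // subr_ge0.
by rewrite -{1}(share_rev_fixpoint w_ge0 g); apply: ler_sum => i _.
Qed.

End LogitShares.

Section MNL.
Variables (R : realType) (n m : nat) (a b : 'I_n -> 'I_m -> R).
Hypothesis b_gt0 : forall i j, 0 < b i j.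
Implicit Types (p f : 'I_n -> R) (j : 'I_m).

(* [demand a b j p i] unfolds to [share (mnl_weight j p) i]; this conversion is used silently. *)
Definition mnl_weight j p i := expR (a i j - b i j * p i).

Lemma mnl_weight_ge0 j p i : 0 <= mnl_weight j p i.
Proof. exact: expR_ge0. Qed.

Lemma revjE j p : revj a b j p = \sum_i p i * share (mnl_weight j p) i.
Proof. by []. Qed.

Lemma demand_gt0 j p i : 0 < demand a b j p i.
Proof. by rewrite divr_gt0 ?expR_gt0 // (share_denom_gt0 (mnl_weight_ge0 j p)). Qed.

Lemma revj_ge0 j p : (forall i, 0 <= p i) -> 0 <= revj a b j p.
Proof.
by move=> p_ge0; apply: sumr_ge0 => i _; rewrite mulr_ge0 // ltW ?demand_gt0.
Qed.

(* Moving [p i] alone to [t = r + 1/b_ij] cannot raise revenue, which gives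
   [1 <= z * expR (1 - z)] for [z = b_ij (p i - r)], hence [z = 1]. *)
Lemma revj_argmax_markup j p i : (forall k, 0 <= p k) ->
  (forall p', (forall k, 0 <= p' k) -> revj a b j p' <= revj a b j p) ->
  p i = revj a b j p + (b i j)^-1.
Proof.
move=> p_ge0 p_max.
set r := revj a b j p; set t := r + (b i j)^-1.
have b_neq0 : b i j != 0 := lt0r_neq0 (b_gt0 i j).
pose p' k := if k == i then t else p k.
have p'_ge0 k : 0 <= p' k.
  rewrite /p'; case: eqP => // _.
  by rewrite addr_ge0 ?revj_ge0 // invr_ge0 ltW.
set w := mnl_weight j p; set w' := mnl_weight j p'.
have markup_le : (t - r) * w' i <= (p i - r) * w i.
  have fixp := share_rev_fixpoint (mnl_weight_ge0 j p) p.
  rewrite -revjE -/r -/w in fixp.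
  have := p_max p' p'_ge0.
  rewrite revjE share_rev_le_iff; last exact: mnl_weight_ge0.
  rewrite -/r -/w' -{2}fixp.
  rewrite (bigD1 i) // [X in _ <= X](bigD1 i) //= {1}/p' eqxx.
  rewrite (eq_bigr (fun k => (p k - r) * w k)) ?lerD2r // => k /negbTE k_neq_i.
  by rewrite /w' /w /mnl_weight /p' k_neq_i.
have wE : w i = w' i * expR (1 - b i j * (p i - r)).
  by rewrite /w /w' /mnl_weight /p' eqxx -expRD; congr expR; rewrite /t; field.
have tE : t - r = (b i j)^-1 by rewrite /t addrC addKr.
have z_eq1 : b i j * (p i - r) = 1.
  have : 1 <= b i j * (p i - r) * expR (1 - b i j * (p i - r)).
    move: markup_le; rewrite tE wE mulrCA mulrC (ler_pM2l (expR_gt0 _)).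
    by rewrite -[_^-1]mul1r ler_pdivrMr ?b_gt0 // mulrAC [_ * b i j]mulrC.
  by apply: contraTeq => /mulr_expR1B_lt1; rewrite ltNge.
by rewrite /t -[(b i j)^-1]mulr1 -z_eq1 mulKf // addrC subrK.
Qed.

(* The hypothesis gives [T <= f i] for the left-hand side [T]; on the prices above the ray
   the weight at [q f] is the larger one and the markup [f i - T] is nonnegative. *)
Lemma sum_demand_ray_ge j p f q : (forall i, 0 <= f i) ->
  (forall k, \sum_i demand a b j p i * f i <= f k) ->
  \sum_(i | q * f i <= p i) demand a b j p i * f i
    <= \sum_i demand a b j (fun i => q * f i) i * f i.
Proof.
move=> f_ge0 sum_le_f.
set P := fun i => q * f i <= p i.
pose g i := if P i then f i else 0.
have demand_f_ge0 i : 0 <= demand a b j p i * f i.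
  by rewrite mulr_ge0 // ltW ?demand_gt0.
have sumPE : \sum_(i | P i) demand a b j p i * f i = \sum_i g i * share (mnl_weight j p) i.
  rewrite big_mkcond; apply: eq_bigr => i _.
  by rewrite /g; case: ifP => _; rewrite ?mul0r // mulrC.
rewrite sumPE; under [X in _ <= X]eq_bigr do rewrite mulrC.
apply: share_rev_le => [||i]; try exact: mnl_weight_ge0.
rewrite -sumPE; set T := \sum_(i | P i) _.
have T_ge0 : 0 <= T by exact: sumr_ge0.
have T_le_f k : T <= f k.
  by apply: le_trans (sum_le_f k); rewrite [X in _ <= X](bigID P) /= lerDl sumr_ge0.
rewrite /g; case: ifP => Pi.
  rewrite ler_wpM2l ?subr_ge0 // ler_expR lerD2l lerN2 ler_wpM2l //.
  exact: ltW.
apply: (@le_trans _ _ 0).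
  by rewrite sub0r mulNr oppr_le0 mulr_ge0 ?mnl_weight_ge0.
by rewrite mulr_ge0 ?mnl_weight_ge0 // subr_ge0.
Qed.
End MNL.

Lemma constant_parallel_evec (R : realType) n (g : 'I_n -> R) (i0 : 'I_n) :
  0 < g i0 -> (forall i, g i = g i0) ->
  exists c, 0 < c /\ forall i, g i = c * @evec R n i.
Proof. by move=> g_gt0 g_const; exists (g i0); split=> // i; rewrite /evec mulr1. Qed.

Section LatentClass.
Variables (R : realType) (n m : nat).
Variables (theta : 'I_m -> R) (a b : 'I_n -> 'I_m -> R) (pbar : 'I_m -> 'I_n -> R).
Hypotheses (theta_gt0 : forall j, 0 < theta j) (b_gt0 : forall i j, 0 < b i j).
Hypotheses (pbar_gt0 : forall j i, 0 < pbar j i)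
  (pbar_max : forall j (p : 'I_n -> R), (forall i, 0 <= p i) ->
     revj a b j p <= revj a b j (pbar j)).
Implicit Types (p f : 'I_n -> R).
Local Open Scope classical_set_scope.

Lemma totrev_le_Rbar p :
  (forall i, 0 <= p i) -> totrev theta a b p <= Rbar theta a b pbar.
Proof.
move=> p_ge0; apply: ler_sum => j _.
by rewrite ler_wpM2l ?pbar_max // ltW.
Qed.

Lemma totrev_ray_le_Rf f q : (forall i, 0 <= f i) -> 0 < q ->
  totrev theta a b (fun i => q * f i) <= Rf theta a b f.
Proof.
move=> f_ge0 q_gt0; apply: ub_le_sup; last by exists q.
exists (Rbar theta a b pbar) => _ [q' q'_gt0 <-].
by apply: totrev_le_Rbar => i; rewrite mulr_ge0 // ltW.
Qed.

Lemma Rf_le_Rstar f : (forall i, 0 <= f i) -> Rf theta a b f <= Rstar theta a b.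
Proof.
move=> f_ge0; apply: ge_sup.
  by exists (totrev theta a b (fun i => 1 * f i)); exists 1; rewrite /= ?ltr01.
move=> _ [q q_gt0 <-]; apply: ub_le_sup.
  by exists (Rbar theta a b pbar) => _ [p p_ge0 <-]; exact: totrev_le_Rbar.
by exists (fun i => q * f i) => // i; rewrite mulr_ge0 // ltW.
Qed.

Lemma totrev_rayE f q : totrev theta a b (fun i => q * f i)
  = q * \sum_j theta j * \sum_i demand a b j (fun i => q * f i) i * f i.
Proof.
rewrite mulr_sumr; apply: eq_bigr => j _; rewrite mulrCA; congr (_ * _).
by rewrite /revj mulr_sumr; apply: eq_bigr => i _; ring.
Qed.

Lemma price_ratio_image f x : (exists i j, x = pbar j i / f i) <->
  exists t : 'I_n * 'I_m, x = pbar t.2 t.1 / f t.1.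
Proof. by split=> [[i [j ->]] | [[i j] ->]]; [exists (i, j) | exists i, j]. Qed.

Lemma qmin_le f i j : qmin pbar f <= pbar j i / f i.
Proof.
rewrite /qmin; have [t [-> t_min]] := inf_finite_image (price_ratio_image f) (i, j).
exact: (t_min (i, j)).
Qed.

Lemma le_qmax f i j : pbar j i / f i <= qmax pbar f.
Proof.
rewrite /qmax; have [t [-> t_max]] := sup_finite_image (price_ratio_image f) (i, j).
exact: (t_max (i, j)).
Qed.

Lemma qmin_gt0 f (i0 : 'I_n) (j0 : 'I_m) : (forall i, 0 < f i) -> 0 < qmin pbar f.
Proof.
move=> f_gt0; rewrite /qmin.
by have [t [-> _]] := inf_finite_image (price_ratio_image f) (i0, j0); rewrite divr_gt0.
Qed.

Lemma beta_ge1 f (i0 : 'I_n) (j0 : 'I_m) : (forall i, 0 < f i) -> 1 <= beta pbar f.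
Proof.
move=> f_gt0; have qmin_gt0' := qmin_gt0 i0 j0 f_gt0.
rewrite lerDl ln_ge0 // ler_pdivlMr // mul1r.
exact: le_trans (qmin_le f i0 j0) (le_qmax f i0 j0).
Qed.

Lemma Rbar_le_beta_Rf f (i0 : 'I_n) (j0 : 'I_m) : (forall i, 0 < f i) ->
  (forall j k, \sum_i demand a b j (pbar j) i * f i <= f k) ->
  Rbar theta a b pbar <= beta pbar f * Rf theta a b f.
Proof.
move=> f_gt0 sum_demand_le_f.
have f_ge0 i : 0 <= f i := ltW (f_gt0 i).
pose c (t : 'I_m * 'I_n) := theta t.1 * (demand a b t.1 (pbar t.1) t.2 * f t.2).
pose r (t : 'I_m * 'I_n) := pbar t.1 t.2 / f t.2.
have RbarE : Rbar theta a b pbar = \sum_t c t * r t.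
  rewrite /Rbar; under eq_bigr do rewrite /Rstarj /revj mulr_sumr.
  rewrite pair_big; apply: eq_bigr => -[j i] _ /=.
  by rewrite /c /r /=; field; exact: lt0r_neq0.
have layerE q : \sum_(t | q <= r t) c t
    = \sum_j theta j * \sum_(i | q * f i <= pbar j i) demand a b j (pbar j) i * f i.
  under [RHS]eq_bigr do rewrite big_mkcond mulr_sumr.
  rewrite pair_big big_mkcond; apply: eq_bigr => -[j i] _ /=.
  by rewrite /r ler_pdivlMr //; case: ifP; rewrite ?mulr0.
rewrite RbarE mulrC /beta; apply: layer_cake_ln.
- exact: qmin_gt0 i0 j0 f_gt0.
- move=> t; apply: mulr_ge0; first exact: ltW.
  by rewrite mulr_ge0 // ltW ?demand_gt0.
- by move=> [j i]; exact: qmin_le.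
- exact: le_trans (qmin_le f i0 j0) (le_qmax f i0 j0).
- by move=> [j i]; exact: le_qmax.
move=> q q_gt0 _; rewrite layerE.
apply: le_trans (totrev_ray_le_Rf f_ge0 q_gt0).
rewrite totrev_rayE ler_wpM2l ?(ltW q_gt0) //.
apply: ler_sum => j _; rewrite ler_wpM2l ?(ltW (theta_gt0 j)) //.
exact: sum_demand_ray_ge.
Qed.

Section UniformSensitivities.
Hypothesis b_uniform : forall j, exists bj, forall k, b k j = bj.

Lemma pbar_uniform j i i' : pbar j i = pbar j i'.
Proof.
have [bj bjE] := b_uniform j.
have markup k := revj_argmax_markup b_gt0 k (fun k => ltW (pbar_gt0 j k)) (pbar_max j).
by rewrite markup [RHS]markup !bjE.
Qed.

Lemma econ_factor_uniform i i' :
  econ_factor theta a b pbar i = econ_factor theta a b pbar i'.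
Proof. by apply: eq_bigr => j _; rewrite (pbar_uniform j i i'). Qed.

Lemma robust_factor_uniform i i' : robust_factor pbar i = robust_factor pbar i'.
Proof.
rewrite /robust_factor /pL /pH.
have -> // : [set x | exists j, x = pbar j i] = [set x | exists j, x = pbar j i'].
by apply/seteqP; split=> x [j ->]; exists j; rewrite (pbar_uniform j i i').
Qed.

End UniformSensitivities.

Lemma econ_factor_gt0 (j0 : 'I_m) i : 0 < econ_factor theta a b pbar i.
Proof.
have Rstarj_gt0 j : 0 < Rstarj a b pbar j.
  by apply: (sumr_gt0 i) => k; rewrite mulr_gt0 ?demand_gt0.
have Rbar_gt0 : 0 < Rbar theta a b pbar.
  by apply: (sumr_gt0 j0) => j; rewrite mulr_gt0.
by apply: (sumr_gt0 j0) => j; rewrite !mulr_gt0 ?invr_gt0.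
Qed.

Lemma robust_factor_gt0 (j0 : 'I_m) i : 0 < robust_factor pbar i.
Proof.
have column_image x : (exists j, x = pbar j i) <-> exists j, x = pbar j i by [].
have [jL [pLE _]] := inf_finite_image column_image j0.
have [jH [pHE _]] := sup_finite_image column_image j0.
by rewrite sqrtr_gt0 /pL /pH pLE pHE mulr_gt0.
Qed.

End LatentClass.

Theorem corollary3 (R : realType) (n m : nat)
  (theta : 'I_m -> R) (a b : 'I_n -> 'I_m -> R) (pbar : 'I_m -> 'I_n -> R)
  (hn : (0 < n)%N)
  (htheta_pos : forall j, 0 < theta j)
  (htheta_sum : \sum_(j < m) theta j = 1)
  (hb : forall i j, 0 < b i j)
  (* (A0): R_j attains its maximum over p >= 0 at pbar j, with positive finite components *)
  (hpbar_pos : forall j i, 0 < pbar j i)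
  (hpbar_max : forall j (p : 'I_n -> R), (forall i, 0 <= p i) ->
                 revj a b j p <= revj a b j (pbar j)) :
  (* (i) *)
  (Rbar theta a b pbar <= beta pbar (@evec R n) * Rf theta a b (@evec R n)
   /\ beta pbar (@evec R n) * Rf theta a b (@evec R n)
        <= beta pbar (@evec R n) * Rstar theta a b)
  /\
  (* (ii) *)
  ((forall j, exists bj : R, forall k, b k j = bj) ->
     (exists c : R, 0 < c /\ forall i, econ_factor theta a b pbar i = c * @evec R n i)
     /\ (exists c : R, 0 < c /\ forall i, robust_factor pbar i = c * @evec R n i))
  /\
  (* (iii) *)
  (forall f : 'I_n -> R, (forall i, 0 < f i) ->
     (forall j (k : 'I_n), \sum_(i < n) demand a b j (pbar j) i * f i <= f k) ->
     Rbar theta a b pbar <= beta pbar f * Rf theta a b f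
     /\ beta pbar f * Rf theta a b f <= beta pbar f * Rstar theta a b).
Proof.
have [j0 _] : exists j0 : 'I_m, true && (0 < theta j0).
  apply: psumr_neq0P => [j _|]; first exact: ltW.
  by rewrite htheta_sum => /eqP; rewrite oner_eq0.
pose i0 : 'I_n := Ordinal hn.
have part_iii (f : 'I_n -> R) : (forall i, 0 < f i) ->
    (forall j k, \sum_i demand a b j (pbar j) i * f i <= f k) ->
    Rbar theta a b pbar <= beta pbar f * Rf theta a b f
    /\ beta pbar f * Rf theta a b f <= beta pbar f * Rstar theta a b.
  move=> f_gt0 sum_demand_le_f; split; first exact: Rbar_le_beta_Rf.
  rewrite ler_wpM2l ?(le_trans ler01 (beta_ge1 hpbar_pos i0 j0 f_gt0)) //.
  by apply: (Rf_le_Rstar htheta_pos hpbar_max) => i; exact: ltW.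
split; last split=> // b_uniform.
  apply: part_iii => [i | j k]; first exact: ltr01.
  under eq_bigr do rewrite /evec mulr1.
  exact: sum_share_le1 (mnl_weight_ge0 a b j (pbar j)).
split; apply: (constant_parallel_evec (i0 := i0)) => [|i].
- exact: econ_factor_gt0.
- exact: econ_factor_uniform.
- exact: robust_factor_gt0.
- exact: (robust_factor_uniform hb hpbar_pos hpbar_max b_uniform).
Qed.
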